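(* Let $\mathfrak{n}$ be a Heisenberg Lie algebra over $K$ of dimension $n\ge5$. Then every LR-structure on $\mathfrak{n}$ is complete, i.e. all its left multiplication operators are nilpotent.
   Context: $K$ is a field of characteristic zero. An LR-structure on a Lie algebra $\mathfrak{n}=(V,\{\,,\})$ is a bilinear product $x*y$ on $V$ such that for all $x,y,z\in V$: $x*y-y*x=\{x,y\}$, $x*(y*z)=y*(x*z)$, and $x*\{y,z\}=\{x*y,z\}+\{y,x*z\}$. It is complete if all left multiplications $y\mapsto x*y$ are nilpotent. The Heisenberg Lie algebra of dimension $2m+1$ has a basis $e_1,\dots,e_m,f_1,\dots,f_m,z$ with nonzero brackets $\{e_i,f_i\}=z$. *)

From HB Require Import structures.
From mathcomp Require Import all_boot all_order all_algebra.
Set Implicit Arguments. Unset Strict Implicit. Unset Printing Implicit Defensive.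
Import GRing.Theory.
Local Open Scope ring_scope.

(* The Heisenberg Lie algebra of dimension 2m+1, realised on row vectors
   'rV[K]_(m.*2.+1) with coordinates indexed by 'I_(m.*2.+1):
   index i < m      <-> e_(i+1),
   index m + i      <-> f_(i+1)   (i < m),
   index 2m (ord_max) <-> z. *)
Definition heis_e (m : nat) (i : nat) : 'I_(m.*2.+1) := inord i.
Definition heis_f (m : nat) (i : nat) : 'I_(m.*2.+1) := inord (m + i).
Definition heis_z (m : nat) : 'I_(m.*2.+1) := ord_max.

(* {x,y} = (sum_i (x_{e_i} y_{f_i} - x_{f_i} y_{e_i})) z, i.e. the bilinear
   bracket with only nonzero brackets {e_i,f_i} = z = -{f_i,e_i}. *)
Definition heis_bracket (K : fieldType) (m : nat)
  (x y : 'rV[K]_(m.*2.+1)) : 'rV[K]_(m.*2.+1) :=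
  (\sum_(i < m) (x 0 (heis_e m i) * y 0 (heis_f m i)
                 - x 0 (heis_f m i) * y 0 (heis_e m i)))
    *: delta_mx 0 (heis_z m).

Definition bilinear_product (K : fieldType) (V : lmodType K)
  (p : V -> V -> V) : Prop :=
  (forall (a : K) (x y z : V), p (a *: x + y) z = a *: p x z + p y z) /\
  (forall (a : K) (x y z : V), p x (a *: y + z) = a *: p x y + p x z).

Definition LR_structure (K : fieldType) (V : lmodType K)
  (br : V -> V -> V) (p : V -> V -> V) : Prop :=
  [/\ bilinear_product p,
      (forall x y : V, p x y - p y x = br x y),
      (forall x y z : V, p x (p y z) = p y (p x z)) &
      (forall x y z : V, p x (br y z) = br (p x y) z + br y (p x z))].

Definition complete_product (K : fieldType) (V : lmodType K)
  (p : V -> V -> V) : Prop :=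
  forall x : V, exists k : nat, forall y : V, iter k (p x) y = 0.

From HB Require Import structures.
From mathcomp Require Import all_boot all_order all_algebra.
From mathcomp Require Import ring zify.
Set Implicit Arguments. Unset Strict Implicit. Unset Printing Implicit Defensive.
Import GRing.Theory.
Local Open Scope ring_scope.

(* Write the bracket as {x,y} = w(x,y) z.  Each left multiplication L_x is a
   derivation of the bracket, so L_x z = lam(x) z and w(L_x u, v) + w(u, L_x v)
   = lam(x) w(u, v).  Together with x*u - u*x = w(x,u) z this makes lam satisfy
   a cyclic identity; testing it on a pair (e_k, f_k) orthogonal to a basis
   vector x, which exists once m >= 2, gives lam = 0.  So every L_x is w-skew,
   and L_x^2 is w-symmetric; but L_x^2 also agrees with the w-skew map L_(x*x)
   modulo z.  In characteristic 0 this puts the image of L_x^2 in the radical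
   K z of w, which L_x kills: L_x^3 = 0. *)

Definition central_bracket (K : fieldType) (V : lmodType K)
  (om : V -> V -> K) (z : V) (x y : V) : V := om x y *: z.

Section BilinearProduct.
Variables (K : fieldType) (V : lmodType K) (p : V -> V -> V).
Hypothesis bil : bilinear_product p.

Lemma bilinear_prodr0 x : p x 0 = 0.
Proof.
have := bil.2 1 x 0 0; rewrite scaler0 addr0 scale1r => E.
by apply: (@addrI _ (p x 0)); rewrite addr0 -E.
Qed.

Lemma bilinear_prodrZ x c v : p x (c *: v) = c *: p x v.
Proof. by rewrite -[c *: v]addr0 bil.2 bilinear_prodr0 addr0. Qed.

End BilinearProduct.

Section CentralExtension.
Variables (K : fieldType) (V : lmodType K) (om : V -> V -> K) (z e f : V).
Hypotheses (om_linl : forall a x y w, om (a *: x + y) w = a * om x w + om y w)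
  (om_antisym : forall x y, om x y = - om y x)
  (om_centre : forall v, om z v = 0)
  (om_radical : forall {w}, (forall u, om u w = 0) -> exists c, w = c *: z)
  (om_ef : om e f = 1) (z_neq0 : z != 0).

Lemma om_linr a x y w : om w (a *: x + y) = a * om w x + om w y.
Proof. by rewrite om_antisym om_linl (om_antisym x) (om_antisym y); ring. Qed.

Lemma om_addZl w c v : om (w + c *: z) v = om w v.
Proof. by rewrite addrC om_linl om_centre mulr0 add0r. Qed.

Lemma scalerZ_inj c d : c *: z = d *: z -> c = d.
Proof.
move/eqP; rewrite -subr_eq0 -scalerBl scaler_eq0 (negbTE z_neq0) orbF subr_eq0.
by move/eqP.
Qed.

Variable p : V -> V -> V.
Hypothesis LRp : LR_structure (central_bracket om z) p.

Lemma lr_mulrZ x c v : p x (c *: v) = c *: p x v.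
Proof. by case: LRp => bil _ _ _; apply: bilinear_prodrZ. Qed.

Lemma lr_mulC_centre x u : p x u = p u x + om x u *: z.
Proof. by case: LRp => _ comm _ _; apply/eqP; rewrite addrC -subr_eq comm. Qed.

Definition centre_eigenvalue x := om (p x e) f + om e (p x f).

Lemma lr_mul_centre x : p x z = centre_eigenvalue x *: z.
Proof.
case: LRp => _ _ _ der; have := der x e f.
by rewrite /central_bracket om_ef scale1r -scalerDl.
Qed.

Lemma lr_om_derivation x u v :
  om (p x u) v + om u (p x v) = centre_eigenvalue x * om u v.
Proof.
case: LRp => _ _ _ der; have := der x u v.
rewrite /central_bracket lr_mulrZ lr_mul_centre scalerA -scalerDl.
by move/scalerZ_inj; rewrite mulrC.
Qed.

Lemma lr_om_mulC x u v : om (p x u) v = om (p u x) v.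
Proof. by rewrite lr_mulC_centre om_addZl. Qed.

Lemma centre_eigenvalue_linear a x y :
  centre_eigenvalue (a *: x + y) = a * centre_eigenvalue x + centre_eigenvalue y.
Proof.
case: LRp => [[bil _] _ _ _].
by rewrite /centre_eigenvalue !bil !om_linl !om_linr; ring.
Qed.

(* Sum the derivation identity over the cyclic permutations of (x, u, v):
   the six w-terms cancel in pairs by [lr_om_mulC] and antisymmetry. *)
Lemma centre_eigenvalue_cyclic x u v :
  centre_eigenvalue x * om u v + centre_eigenvalue u * om v x
  + centre_eigenvalue v * om x u = 0.
Proof.
rewrite -!lr_om_derivation (om_antisym u) (om_antisym v (p u x)).
rewrite (om_antisym x (p v u)) (lr_om_mulC u x v) (lr_om_mulC v u x).
by rewrite (lr_om_mulC x v u); ring.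
Qed.

Hypothesis centre_eigenvalue0 : forall x, centre_eigenvalue x = 0.
Hypothesis two_neq0 : (2%:R : K) != 0.

Lemma lr_om_skew x u v : om (p x u) v = - om u (p x v).
Proof.
by apply/eqP; rewrite -subr_eq0 opprK lr_om_derivation centre_eigenvalue0 mul0r.
Qed.

Lemma lr_om_mul_sqr x u v : om (p x (p x u)) v = om (p (p x x) u) v.
Proof.
case: LRp => [[_ bil] _ lcomm _].
have pxZ : p x z = 0 by rewrite lr_mul_centre centre_eigenvalue0 scale0r.
rewrite [p x u]lr_mulC_centre addrC bil pxZ scaler0 add0r lcomm.
by rewrite lr_mulC_centre om_addZl.
Qed.

Lemma lr_om_sqr0 x u v : om u (p x (p x v)) = 0.
Proof.
have sym : om u (p x (p x v)) = om (p x (p x u)) v.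
  by rewrite [RHS]lr_om_skew lr_om_skew opprK.
have skew : om (p x (p x u)) v = - om u (p x (p x v)).
  rewrite lr_om_mul_sqr lr_om_skew; congr (- _).
  by rewrite om_antisym -lr_om_mul_sqr om_antisym opprK.
have /eqP : om u (p x (p x v)) * 2%:R = 0.
  by rewrite mulr_natr mulr2n {2}sym skew subrr.
by rewrite mulf_eq0 (negbTE two_neq0) orbF => /eqP.
Qed.

Lemma lr_mul_cube0 x y : iter 3 (p x) y = 0.
Proof.
rewrite /=; have [c ->] := om_radical (lr_om_sqr0 x ^~ y).
by rewrite lr_mulrZ lr_mul_centre centre_eigenvalue0 scale0r scaler0.
Qed.

End CentralExtension.

Lemma rV_functional_eq0 (K : fieldType) n (g : 'rV[K]_n -> K) :
  (forall a x y, g (a *: x + y) = a * g x + g y) ->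
  (forall j, g (delta_mx 0 j) = 0) -> forall x, g x = 0.
Proof.
move=> lin g_delta x; rewrite (row_sum_delta x).
have g0 : g 0 = 0.
  have := lin 1 0 0; rewrite scaler0 addr0 mul1r => g0D.
  by apply: (@addrI _ (g 0)); rewrite addr0 -g0D.
apply: (big_ind (fun v => g v = 0)) => // [u v gu gv|j _].
  by rewrite -[u]scale1r lin gu gv mulr0 addr0.
by rewrite -[_ *: _]addr0 lin g0 g_delta mulr0 addr0.
Qed.

Section Heisenberg.
Variables (K : fieldType) (m : nat).
Local Notation V := 'rV[K]_(m.*2.+1).
Local Notation Z := (delta_mx 0 (heis_z m) : V).

Definition heis_form (x y : V) : K :=
  \sum_(i < m) (x 0 (heis_e m i) * y 0 (heis_f m i)
                - x 0 (heis_f m i) * y 0 (heis_e m i)).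

Lemma val_heis_e (i : 'I_m) : val (heis_e m i) = i.
Proof. by rewrite /heis_e /= inordK //; have := ltn_ord i; lia. Qed.

Lemma val_heis_f (i : 'I_m) : val (heis_f m i) = (m + i)%N.
Proof. by rewrite /heis_f /= inordK //; have := ltn_ord i; lia. Qed.

Lemma heis_e_eq (i k : 'I_m) : (heis_e m i == heis_e m k) = (i == k).
Proof. by rewrite -(inj_eq val_inj) !val_heis_e. Qed.

Lemma heis_f_eq (i k : 'I_m) : (heis_f m i == heis_f m k) = (i == k).
Proof. by rewrite -(inj_eq val_inj) !val_heis_f -(inj_eq val_inj) /=; lia. Qed.

Lemma heis_e_neq_f (i k : 'I_m) : (heis_e m i == heis_f m k) = false.
Proof. by rewrite -(inj_eq val_inj) val_heis_e val_heis_f; have := ltn_ord i; lia. Qed.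

Lemma heis_z_neq_e (i : 'I_m) : (heis_z m == heis_e m i) = false.
Proof.
by rewrite -(inj_eq val_inj) val_heis_e /=; have := ltn_ord i; lia.
Qed.

Lemma heis_z_neq_f (i : 'I_m) : (heis_z m == heis_f m i) = false.
Proof.
by rewrite -(inj_eq val_inj) val_heis_f /=; have := ltn_ord i; lia.
Qed.

Lemma row_deltaE (a b : 'I_(m.*2.+1)) : (delta_mx 0 a : V) 0 b = (a == b)%:R.
Proof. by rewrite mxE eqxx eq_sym. Qed.

Lemma heis_bracketE : @heis_bracket K m = central_bracket heis_form Z.
Proof. by []. Qed.

Lemma heis_z_delta_neq0 : Z != 0.
Proof. by apply/eqP => /rowP/(_ (heis_z m)) /eqP; rewrite !mxE !eqxx oner_eq0. Qed.

Lemma heis_form_linl a x y w :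
  heis_form (a *: x + y) w = a * heis_form x w + heis_form y w.
Proof.
by rewrite /heis_form mulr_sumr -big_split; apply: eq_bigr => i _; rewrite !mxE /=; ring.
Qed.

Lemma heis_form_antisym x y : heis_form x y = - heis_form y x.
Proof.
by rewrite /heis_form -sumrN; apply: eq_bigr => i _; rewrite opprB; congr (_ - _); exact: mulrC.
Qed.

Lemma heis_form_centre v : heis_form Z v = 0.
Proof.
by rewrite /heis_form big1 // => i _; rewrite !row_deltaE heis_z_neq_e heis_z_neq_f !mul0r subr0.
Qed.

Lemma heis_form_deltae (k : 'I_m) v :
  heis_form (delta_mx 0 (heis_e m k)) v = v 0 (heis_f m k).
Proof.
rewrite /heis_form (bigD1 k) //= big1 => [|i ik].
  by rewrite !row_deltaE eqxx heis_e_neq_f mul1r mul0r subr0 addr0.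
by rewrite !row_deltaE heis_e_eq eq_sym (negbTE ik) heis_e_neq_f !mul0r subr0.
Qed.

Lemma heis_form_deltaf (k : 'I_m) v :
  heis_form (delta_mx 0 (heis_f m k)) v = - v 0 (heis_e m k).
Proof.
rewrite /heis_form (bigD1 k) //= big1 => [|i ik].
  by rewrite !row_deltaE eqxx eq_sym heis_e_neq_f mul1r mul0r sub0r addr0.
by rewrite !row_deltaE heis_f_eq eq_sym heis_e_neq_f eq_sym (negbTE ik) !mul0r subr0.
Qed.

Lemma heis_form_ef (i : 'I_m) :
  heis_form (delta_mx 0 (heis_e m i)) (delta_mx 0 (heis_f m i)) = 1.
Proof. by rewrite heis_form_deltae row_deltaE eqxx. Qed.

Lemma heis_indexP (j : 'I_(m.*2.+1)) :
  j = heis_z m \/ exists i : 'I_m, j = heis_e m i \/ j = heis_f m i.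
Proof.
have [->|zj] := eqVneq j (heis_z m); [by left | right].
have j_lt : (j < m.*2)%N.
  by move: zj (ltn_ord j); rewrite -(inj_eq val_inj) /=; lia.
have [jm|mj] := ltnP j m.
  by exists (Ordinal jm); left; apply: val_inj; rewrite val_heis_e.
have jm : (j - m < m)%N by move: j_lt; lia.
by exists (Ordinal jm); right; apply: val_inj; rewrite val_heis_f /=; lia.
Qed.

Lemma heis_form_radical w : (forall u, heis_form u w = 0) -> exists c, w = c *: Z.
Proof.
move=> rad; exists (w 0 (heis_z m)); apply/rowP => j; rewrite !mxE eqxx /=.
have [->|[i [->|->]]] := heis_indexP j; first by rewrite eqxx mulr1.
  rewrite eq_sym heis_z_neq_e mulr0; apply/eqP.
  by rewrite -oppr_eq0 -heis_form_deltaf rad.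
by rewrite eq_sym heis_z_neq_f mulr0 -heis_form_deltae rad.
Qed.

Lemma heis_cyclic_functional_eq0 (hm : (2 <= m)%N) (lam : V -> K) :
  (forall a x y, lam (a *: x + y) = a * lam x + lam y) ->
  (forall x u v, lam x * heis_form u v + lam u * heis_form v x
                 + lam v * heis_form x u = 0) ->
  forall x, lam x = 0.
Proof.
move=> lin cyc; apply: rV_functional_eq0 => // j.
have [k ek fk] : exists2 k : 'I_m, j != heis_e m k & j != heis_f m k.
  have m_gt0 : (0 < m)%N by lia.
  have [->|[i ji]] := heis_indexP j.
    by exists (Ordinal m_gt0); rewrite ?heis_z_neq_e ?heis_z_neq_f.
  have [k ki] : exists k : 'I_m, k != i.
    have [i0|i_gt0] := posnP i.
      by exists (Ordinal hm); rewrite -(inj_eq val_inj) /= i0.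
    by exists (Ordinal m_gt0); rewrite -(inj_eq val_inj) /=; lia.
  case: ji => ->; exists k.
  - by rewrite heis_e_eq eq_sym.
  - by rewrite heis_e_neq_f.
  - by rewrite eq_sym heis_e_neq_f.
  - by rewrite heis_f_eq eq_sym.
have := cyc (delta_mx 0 j) (delta_mx 0 (heis_e m k)) (delta_mx 0 (heis_f m k)).
rewrite heis_form_deltae heis_form_deltaf heis_form_antisym heis_form_deltae.
by rewrite !row_deltaE eqxx (negbTE ek) (negbTE fk) oppr0 !mulr0 !addr0 mulr1.
Qed.

End Heisenberg.

Theorem corollary4p12 (K : fieldType) (m : nat)
  (hK : [pchar K] =i pred0) (hm : (2 <= m)%N)
  (p : 'rV[K]_(m.*2.+1) -> 'rV[K]_(m.*2.+1) -> 'rV[K]_(m.*2.+1)) :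
  LR_structure (@heis_bracket K m) p -> complete_product p.
Proof.
rewrite heis_bracketE => LRp x; exists 3%N => y.
have i0 : 'I_m by exists 0%N; lia.
have lin := @heis_form_linl K m; have anti := @heis_form_antisym K m.
have centre := @heis_form_centre K m; have ef := @heis_form_ef K m i0.
have z_neq0 := heis_z_delta_neq0 K m.
apply: (lr_mul_cube0 lin anti centre (@heis_form_radical K m) ef z_neq0 LRp).
- apply: heis_cyclic_functional_eq0 => //.
  + exact: (centre_eigenvalue_linear _ _ lin anti LRp).
  + exact: (centre_eigenvalue_cyclic lin anti centre ef z_neq0 LRp).
- by move/pcharf0P: hK => ->.
Qed.
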